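(* Let $k$ be a positive integer. Let $T_1,T_2$ be disjoint subsets of $\{0,1,\ldots,k\}$ such that no $t\in T_1$ satisfies $t-1\in T_2$. Let $$A=\left\{\left(3^{a_1}+\cdots+3^{a_m}\right)+2\left(3^{b_1}+\cdots+3^{b_n}\right)\mid \{a_1,\ldots,a_m\}\subseteq T_1,\ \{b_1,\ldots,b_n\}\subseteq T_2\right\}.$$ Then $S(A)$ is an independent Stanley sequence.
   Context: A set of non-negative integers is 3-free if no three of its elements form an arithmetic progression. For a finite 3-free set $A=\{a_0<\cdots<a_k\}$ of non-negative integers, the Stanley sequence $S(A)=(a_n)_{n\ge0}$ is the increasing sequence with initial terms $a_0,\ldots,a_k$ in which each subsequent $a_{n+1}$ is the smallest integer greater than $a_n$ such that $\{a_0,\ldots,a_{n+1}\}$ is 3-free. A Stanley sequence $(a_n)$ is independent if there is a constant $\lambda$ such that for all sufficiently large $k$: $a_{2^k+i}=a_{2^k}+a_i$ for all $0\le i<2^k$, and $a_{2^k}=2a_{2^k-1}-\lambda+1$. *)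

From mathcomp Require Import all_boot all_order all_algebra.
Set Implicit Arguments. Unset Strict Implicit. Unset Printing Implicit Defensive.
Import GRing.Theory Num.Theory.

Definition threefree (P : nat -> Prop) : Prop :=
  forall x y z, x < y -> y < z -> P x -> P y -> P z -> x + z <> 2 * y.

Definition prefix_set (a : nat -> nat) (n : nat) : nat -> Prop :=
  fun x => exists2 i, i <= n & a i = x.

Definition stanley_of (A : nat -> Prop) (a : nat -> nat) : Prop :=
  exists k : nat,
    (forall i j, i < j <= k -> a i < a j) /\
    (forall x, A x <-> prefix_set a k x) /\
    (forall n, k <= n ->
       [/\ a n < a n.+1,
           threefree (prefix_set a n.+1) &
           forall y, a n < y -> y < a n.+1 ->
             ~ threefree (fun x => prefix_set a n x \/ x = y)]).

Definition independent (a : nat -> nat) : Prop :=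
  exists (lambda : int) (K : nat), forall k, K <= k ->
    let p := (2 ^ k)%N in
    (forall i, i < p -> a (p + i) = a p + a i) /\
    (Posz (a p) = 2 * Posz (a p.-1) - lambda + 1)%R.

Definition setA (k : nat) (T1 T2 : {set 'I_k.+1}) : nat -> Prop :=
  fun x => exists S1 S2 : {set 'I_k.+1},
    [/\ S1 \subset T1, S2 \subset T2 &
        x = \sum_(i in S1) 3 ^ (val i) + 2 * \sum_(i in S2) 3 ^ (val i)].

(* Let D be the set of numbers whose ternary digits are all 0 or 1; it is the
   term set of S({0}).  Reading the digits from the top, A = 3A' + {0, c} with
   c = 1, 2 or 0 according as the lowest position lies in T1, T2 or neither.
   If G is the term set of S(A') and t = max A', the term set of S(A) is
   3G + {0, c} for c = 1, 2 and 3G ∪ (3(t + D) + 1) for c = 0; the case c = 2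
   needs t + 1 in G, and this is where the condition on T1 and T2 enters.
   Like D, each such set is self-similar: for large J it has 2^J elements
   below 3^J, repeats them translated by 3^J, and misses [2 3^J, 3^(J+1)).
   For the increasing enumeration (a_n) of G this gives
   a_(2^J + i) = 3^J + a_i, which is independence. *)

From mathcomp Require Import all_boot all_order all_algebra.
From mathcomp Require Import zify.
Set Implicit Arguments. Unset Strict Implicit. Unset Printing Implicit Defensive.

Lemma ediv3 x : exists q r, r < 3 /\ x = 3 * q + r.
Proof. by exists (x %/ 3), (x %% 3); split; lia. Qed.

Definition ap_free (G : pred nat) :=
  forall x y z, G x -> G y -> G z -> x + z = 2 * y -> x = z.

Lemma threefree_ap_free (G : pred nat) (P : nat -> Prop) :
  ap_free G -> (forall x, P x -> G x) -> threefree P.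
Proof.
move=> apG PG x y z lt_xy lt_yz Px Py Pz Exz.
by have := apG x y z (PG _ Px) (PG _ Py) (PG _ Pz) Exz; lia.
Qed.

Lemma count_iotaD (P : pred nat) m n :
  count P (iota 0 (m + n)) = count P (iota 0 m) + count (fun x => P (m + x)) (iota 0 n).
Proof. by rewrite iotaD count_cat add0n -{2}(addn0 m) iotaDl count_map. Qed.

Lemma count_iota_eq0 (P : pred nat) m :
  (forall x, x < m -> P x = false) -> count P (iota 0 m) = 0.
Proof.
move=> Pm; rewrite (@eq_in_count _ P pred0) ?count_pred0 // => x.
by rewrite mem_iota => /andP[_ lt_x]; exact: Pm.
Qed.

Lemma count_andl b (P : pred nat) s : count (fun x => b && P x) s = b * count P s.
Proof. by case: b; rewrite ?mul1n ?mul0n ?count_pred0. Qed.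

Lemma count_iota_mul3 (P : pred nat) n :
  count P (iota 0 (3 * n)) = \sum_(r < 3) count (fun q => P (3 * q + r)) (iota 0 n).
Proof.
elim: n => [|n IH]; first by rewrite muln0 big1.
rewrite mulnS addnC count_iotaD IH -[n.+1]addn1.
under [RHS]eq_bigr do rewrite count_iotaD.
by rewrite big_split /= !big_ord_recr !big_ord0 /= !addn0; lia.
Qed.

(** * Numbers with ternary digits 0 and 1 *)

Fixpoint digits01_fuel (n x : nat) : bool :=
  if n is n'.+1 then (x %% 3 != 2) && digits01_fuel n' (x %/ 3) else true.

(* [x] has no ternary digit 2; fuel [x] suffices since [x %/ 3 < x] for [x > 0]. *)
Definition digits01 x := digits01_fuel x x.

Lemma digits01_fuel_enough n m x :
  x <= n -> x <= m -> digits01_fuel n x = digits01_fuel m x.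
Proof.
elim: n m x => [|n IH] [|m] x //= le_xn le_xm.
- by rewrite (_ : x = 0); [elim: m {le_xm} | lia].
- by rewrite (_ : x = 0); [elim: n {IH le_xn} | lia].
- by congr (_ && _); apply: IH; lia.
Qed.

Lemma digits01_3D y r : r < 3 -> digits01 (3 * y + r) = (r != 2) && digits01 y.
Proof.
move=> lt_r3; rewrite /digits01.
case E: (3 * y + r) => [|n].
  have [-> ->] : y = 0 /\ r = 0 by lia.
  by [].
rewrite /= -E (_ : (3 * y + r) %% 3 = r) 1?(_ : (3 * y + r) %/ 3 = y); try lia.
by congr (_ && _); apply: digits01_fuel_enough; lia.
Qed.

Lemma digits01_mul3 y : digits01 (3 * y) = digits01 y.
Proof. by rewrite -[3 * y]addn0 digits01_3D. Qed.

Lemma digits01_mul3_1 y : digits01 (3 * y + 1) = digits01 y.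
Proof. by rewrite digits01_3D. Qed.

Lemma digits01_ap_free : ap_free digits01.
Proof.
move=> x y; elim/ltn_ind: y x => y IH x z.
have [qx [rx [lt_rx ->]]] := ediv3 x; have [qy [ry [lt_ry Ey]]] := ediv3 y.
have [qz [rz [lt_rz ->]]] := ediv3 z.
rewrite Ey !digits01_3D // => /andP[rx2 Dx] /andP[ry2 Dy] /andP[rz2 Dz] E.
have [Er Eq] : rx = rz /\ qx + qz = 2 * qy by move: rx2 ry2 rz2; rewrite !neq_ltn; lia.
case: (posnP y) => [y0|y_gt0]; first lia.
by rewrite Er (IH qy _ qx qz Dx Dy Dz Eq); lia.
Qed.

(* Digitwise, the digits 0, 1, 2 of [u] get the digits (0, 0), (1, 1), (0, 1)
   in [(p0, p1)]. *)
Lemma digits01_ap_completion u : exists p0 p1,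
  [/\ digits01 p0, digits01 p1, p0 + u = 2 * p1, p1 <= u &
      (~~ digits01 u -> p1 < u)].
Proof.
elim/ltn_ind: u => u IH.
case: (posnP u) => [->|u_gt0]; first by exists 0, 0.
have [q [r [lt_r3 Eu]]] := ediv3 u.
have [p0 [p1 [D0 D1 Ep le_p1 lt_p1]]] := IH q ltac:(lia).
rewrite Eu digits01_3D //.
have [Er|[Er|Er]] : r = 0 \/ r = 1 \/ r = 2 by lia.
- exists (3 * p0), (3 * p1); rewrite !digits01_mul3 Er /=.
  by split=> //; try lia; move=> /lt_p1; lia.
- exists (3 * p0 + 1), (3 * p1 + 1); rewrite !digits01_mul3_1 Er /=.
  by split=> //; try lia; move=> /lt_p1; lia.
- exists (3 * p0), (3 * p1 + 1); rewrite digits01_mul3 digits01_mul3_1 Er /=.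
  by split=> //; lia.
Qed.

Lemma digits01_shift J x : x < 3 ^ J -> digits01 (3 ^ J + x) = digits01 x.
Proof.
elim: J x => [|J IH] x; first by rewrite expn0 => lt_x; rewrite (_ : x = 0) //; lia.
have [q [r [lt_r3 ->]]] := ediv3 x => lt_x.
have lt_q : q < 3 ^ J by rewrite expnS in lt_x; lia.
have -> : 3 ^ J.+1 + (3 * q + r) = 3 * (3 ^ J + q) + r by rewrite expnS; lia.
by rewrite !digits01_3D // IH.
Qed.

Lemma digits01_double_lt J x : digits01 x -> x < 3 ^ J -> 2 * x < 3 ^ J.
Proof.
elim: J x => [|J IH] x Dx lt_x; first by rewrite expn0 in lt_x *; lia.
have [q [r [lt_r3 Ex]]] := ediv3 x.
move: Dx; rewrite Ex digits01_3D // => /andP[r2 Dq].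
have := IH q Dq ltac:(rewrite expnS in lt_x; lia).
by rewrite expnS; move: r2; rewrite neq_ltn; lia.
Qed.

Lemma digits01_window J x : digits01 x -> x < 3 ^ J.+1 ->
  2 * x < 3 ^ J \/ 3 ^ J <= x /\ 2 * (x - 3 ^ J) < 3 ^ J.
Proof.
move=> Dx lt_x; case: (ltnP x (3 ^ J)) => [lt_xJ|le_Jx].
  by left; apply: digits01_double_lt.
have lt_d : x - 3 ^ J < 3 ^ J.
  by have := digits01_double_lt Dx lt_x; rewrite expnS; lia.
right; split=> //; apply: (digits01_double_lt _ lt_d).
by rewrite -(digits01_shift lt_d) subnKC.
Qed.

Lemma count_digits01 J : count digits01 (iota 0 (3 ^ J)) = 2 ^ J.
Proof.
elim: J => [|J IH] //; rewrite expnS count_iota_mul3.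
under eq_bigr => r _ do rewrite (eq_count (fun q => digits01_3D q (ltn_ord r))) count_andl IH.
by rewrite !big_ord_recr big_ord0 /= expnS; lia.
Qed.

(** * Stanley sets and a new last ternary digit *)

(* [G] is the term set of the Stanley sequence S(A) and [t] = max A;
   [stanley_greedy] expresses the minimality of each new term. *)
Record stanley_set (A G : pred nat) (t : nat) : Prop := StanleySet {
  stanley_prefix : forall x, x <= t -> G x = A x;
  stanley_max_mem : A t;
  stanley_max_ub : forall x, A x -> x <= t;
  stanley_ap_free : ap_free G;
  stanley_greedy : forall y, t < y -> ~~ G y ->
    exists x w, [/\ G x, G w, w < y & x + y = 2 * w] }.

Lemma stanley_set_cases A G t q : stanley_set A G t -> t <= q ->
  G q \/ exists a b, [/\ G a, G b, b < q & a + q = 2 * b].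
Proof.
case=> prefix At _ _ greedy; rewrite leq_eqVlt => /orP[/eqP <-|lt_tq].
  by left; rewrite prefix.
by case Gq: (G q); [left | right; apply: greedy; rewrite ?Gq].
Qed.

(* Every [t + u] ends a progression [a, t + b, t + u] with [a] in [G] and [b]
   in [digits01]; this covers the residue class 2 when the new digit is 0. *)
Definition shifted_cover (G : pred nat) t :=
  forall u, exists b a, [/\ digits01 b, b <= u, G a & a + u = t + 2 * b].

Definition ext_init c (A : pred nat) : pred nat :=
  fun x => ((x %% 3 == 0) || (c != 0) && (x %% 3 == c)) && A (x %/ 3).

(* The Stanley set of [ext_init c A] = 3A + {0, c}, where [G] is that of [A]
   and [t] = max A: it is 3G + {0, c} when c = 1, 2, and 3G ∪ (3(t + D) + 1)
   when c = 0, with D = [digits01]. *)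
Definition ext_stanley c (G : pred nat) t : pred nat := fun x =>
  if c == 0 then (x %% 3 == 0) && G (x %/ 3)
                 || [&& x %% 3 == 1, t <= x %/ 3 & digits01 (x %/ 3 - t)]
  else ((x %% 3 == 0) || (x %% 3 == c)) && G (x %/ 3).

Lemma ext_initE c A q r : r < 3 ->
  ext_init c A (3 * q + r) = ((r == 0) || (c != 0) && (r == c)) && A q.
Proof.
by move=> lt_r3; rewrite /ext_init (_ : _ %% 3 = r) 1?(_ : _ %/ 3 = q) //; lia.
Qed.

Lemma ext_stanley0E G t q r : r < 3 ->
  ext_stanley 0 G t (3 * q + r)
    = (r == 0) && G q || [&& r == 1, t <= q & digits01 (q - t)].
Proof.
by move=> lt_r3; rewrite /ext_stanley (_ : _ %% 3 = r) 1?(_ : _ %/ 3 = q) //; lia.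
Qed.

Lemma ext_stanleyE c G t q r : 0 < c -> r < 3 ->
  ext_stanley c G t (3 * q + r) = ((r == 0) || (r == c)) && G q.
Proof.
move=> c_gt0 lt_r3; rewrite /ext_stanley (_ : c == 0 = false); last by case: c c_gt0.
by rewrite (_ : _ %% 3 = r) 1?(_ : _ %/ 3 = q) //; lia.
Qed.

Lemma ext_ap_free c G t : 0 < c < 3 -> ap_free G -> ap_free (ext_stanley c G t).
Proof.
move=> /andP[c_gt0 c_lt3] apG x y z.
have [qx [rx [lt_rx ->]]] := ediv3 x; have [qy [ry [lt_ry ->]]] := ediv3 y.
have [qz [rz [lt_rz ->]]] := ediv3 z.
rewrite !ext_stanleyE // => /andP[Rx Gx] /andP[Ry Gy] /andP[Rz Gz] E.
have [Ex Ez] : rx = ry /\ rz = ry.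
  by move: Rx Ry Rz => /orP[]/eqP ? /orP[]/eqP ? /orP[]/eqP ?; subst; lia.
by have := apG _ _ _ Gx Gy Gz ltac:(lia); lia.
Qed.

Lemma ext0_ap_free G t : ap_free G -> ap_free (ext_stanley 0 G t).
Proof.
move=> apG x y z.
have [qx [rx [lt_rx ->]]] := ediv3 x; have [qy [ry [lt_ry ->]]] := ediv3 y.
have [qz [rz [lt_rz ->]]] := ediv3 z.
rewrite !ext_stanley0E //.
move=> /orP[/andP[/eqP ? Gx]|/and3P[/eqP ? le_tx Dx]];
move=> /orP[/andP[/eqP ? Gy]|/and3P[/eqP ? le_ty Dy]];
move=> /orP[/andP[/eqP ? Gz]|/and3P[/eqP ? le_tz Dz]] E; subst; try lia.
- by have := apG _ _ _ Gx Gy Gz ltac:(lia); lia.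
- by have := digits01_ap_free Dx Dy Dz ltac:(lia); lia.
Qed.

Section NonzeroDigit.
Variables (c : nat) (A G : pred nat) (t : nat).
Hypotheses (c_gt0 : 0 < c) (c_lt3 : c < 3) (stG : stanley_set A G t).

Let extE q r := ext_stanleyE G t q c_gt0 (r := r).

Lemma ext_greedy y : 3 * t + c < y -> ~~ ext_stanley c G t y ->
  exists x w, [/\ ext_stanley c G t x, ext_stanley c G t w, w < y & x + y = 2 * w].
Proof.
have [q [r [lt_r3 ->]]] := ediv3 y; rewrite extE // => lt_y.
case Rr: ((r == 0) || (r == c)) => /= NGq.
  have lt_tq : t < q by move: Rr => /orP[]/eqP ?; lia.
  have [a [b [Ga Gb lt_bq E]]] := stanley_greedy stG lt_tq NGq.
  by exists (3 * a + r), (3 * b + r); rewrite !extE // Rr Ga Gb; split=> //; lia.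
have [[Ec Er]|[Ec Er]] : c = 1 /\ r = 2 \/ c = 2 /\ r = 1 by move: Rr; lia.
- have [Gq|[a [b [Ga Gb lt_bq E]]]] := stanley_set_cases stG (ltac:(lia) : t <= q).
    by exists (3 * q + 0), (3 * q + 1); rewrite !extE // Ec Gq; split=> //; lia.
  by exists (3 * a + 0), (3 * b + 1); rewrite !extE // Ec Ga Gb; split=> //; lia.
- have [Gq|[a [b [Ga Gb lt_bq E]]]] := stanley_set_cases stG (ltac:(lia) : t <= q.-1).
    by exists (3 * q.-1 + 0), (3 * q.-1 + 2); rewrite !extE // Ec Gq; split=> //; lia.
  by exists (3 * a + 0), (3 * b + 2); rewrite !extE // Ec Ga Gb; split=> //; lia.
Qed.

Lemma ext_stanley_set :
  stanley_set (ext_init c A) (ext_stanley c G t) (3 * t + c).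
Proof.
have [prefix At At_ub apG _] := stG; have c_neq0 : c != 0 by rewrite -lt0n.
split; [|by rewrite ext_initE // c_neq0 eqxx orbT| |by apply: ext_ap_free; rewrite ?c_gt0|].
- move=> x; have [q [r [lt_r3 ->]]] := ediv3 x => le_x.
  rewrite extE // ext_initE // c_neq0.
  by case Rr: (_ || _) => //=; apply: prefix; move: Rr => /orP[]/eqP; lia.
- move=> x; have [q [r [lt_r3 ->]]] := ediv3 x.
  by rewrite ext_initE // c_neq0 => /andP[Rr /At_ub]; move: Rr => /orP[]/eqP; lia.
- exact: ext_greedy.
Qed.
End NonzeroDigit.

Section ZeroDigit.
Variables (A G : pred nat) (t : nat).
Hypotheses (stG : stanley_set A G t) (covG : shifted_cover G t).

Lemma ext0_greedy y : 3 * t < y -> ~~ ext_stanley 0 G t y ->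
  exists x w, [/\ ext_stanley 0 G t x, ext_stanley 0 G t w, w < y & x + y = 2 * w].
Proof.
have [q [r [lt_r3 ->]]] := ediv3 y; rewrite ext_stanley0E //.
have [->|[->|->]] : r = 0 \/ r = 1 \/ r = 2 by lia.
- rewrite /= orbF => lt_y NGq.
  have [a [b [Ga Gb lt_bq E]]] := stanley_greedy stG (ltac:(lia) : t < q) NGq.
  by exists (3 * a + 0), (3 * b + 0); rewrite !ext_stanley0E //= Ga Gb; split=> //; lia.
- move=> lt_y; rewrite /= (_ : t <= q) /=; last lia.
  move=> NDq; have [p0 [p1 [D0 D1 E le_p1 lt_p1]]] := digits01_ap_completion (q - t).
  exists (3 * (t + p0) + 1), (3 * (t + p1) + 1).
  rewrite !ext_stanley0E //= !leq_addr !addKn D0 D1.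
  by have := lt_p1 NDq; split=> //; lia.
- move=> lt_y _; have [b [a [Db le_b Ga E]]] := covG (q - t).
  exists (3 * a + 0), (3 * (t + b) + 1).
  by rewrite !ext_stanley0E //= Ga leq_addr addKn Db; split=> //; lia.
Qed.

Lemma ext0_stanley_set : stanley_set (ext_init 0 A) (ext_stanley 0 G t) (3 * t).
Proof.
have [prefix At At_ub apG _] := stG.
split; [|by rewrite -[3 * t]addn0 ext_initE| |exact: ext0_ap_free|exact: ext0_greedy].
- move=> x; have [q [r [lt_r3 ->]]] := ediv3 x.
  rewrite ext_stanley0E // ext_initE //=.
  have [->|[->|->]] : r = 0 \/ r = 1 \/ r = 2 by lia.
  + by rewrite /= orbF => le_q; apply: prefix; lia.
  + by move=> lt_q; rewrite /= (_ : t <= q = false) //; apply/negbTE; rewrite -ltnNge; lia.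
  + by [].
- move=> x; have [q [r [lt_r3 ->]]] := ediv3 x.
  by rewrite ext_initE //= orbF => /andP[/eqP -> /At_ub]; lia.
Qed.

End ZeroDigit.

Lemma shifted_cover_ext0 G t :
  shifted_cover G t -> shifted_cover (ext_stanley 0 G t) (3 * t).
Proof.
move=> covG u; have [q [r [lt_r3 ->]]] := ediv3 u.
have [->|[->|->]] : r = 0 \/ r = 1 \/ r = 2 by lia.
- have [b [a [Db le_b Ga E]]] := covG q.
  exists (3 * b + 0), (3 * a + 0).
  by rewrite ext_stanley0E // digits01_3D //= Db Ga; split=> //; lia.
- have [p0 [p1 [D0 D1 E le_p1 _]]] := digits01_ap_completion q.
  exists (3 * p1 + 1), (3 * (t + p0) + 1).
  by rewrite ext_stanley0E // digits01_3D //= D1 leq_addr addKn D0; split=> //; lia.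
- have [b [a [Db le_b Ga E]]] := covG q.
  exists (3 * b + 1), (3 * a + 0).
  by rewrite ext_stanley0E // digits01_3D //= Db Ga; split=> //; lia.
Qed.

Lemma shifted_cover_ext1 G t :
  shifted_cover G t -> shifted_cover (ext_stanley 1 G t) (3 * t + 1).
Proof.
move=> covG u; have [q [r [lt_r3 ->]]] := ediv3 u; have [b [a [Db le_b Ga E]]] := covG q.
have [->|[->|->]] : r = 0 \/ r = 1 \/ r = 2 by lia.
1: exists (3 * b + 0), (3 * a + 1).
2: exists (3 * b + 0), (3 * a + 0).
3: exists (3 * b + 1), (3 * a + 1).
all: by rewrite ext_stanleyE // digits01_3D //= Db Ga; split=> //; lia.
Qed.

Lemma shifted_cover_ext2 G t : shifted_cover G t -> G t.+1 ->
  shifted_cover (ext_stanley 2 G t) (3 * t + 2).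
Proof.
move=> covG Gt1 u; have [q [r [lt_r3 ->]]] := ediv3 u.
have [->|[->|->]] : r = 0 \/ r = 1 \/ r = 2 by lia.
- have [b [a [Db le_b Ga E]]] := covG q; exists (3 * b + 0), (3 * a + 2).
  by rewrite ext_stanleyE // digits01_3D //= Db Ga; split=> //; lia.
- case: q => [|q]; first by exists 1, (3 * t.+1 + 0); rewrite ext_stanleyE //= Gt1; split=> //; lia.
  have [b [a [Db le_b Ga E]]] := covG q; exists (3 * b + 1), (3 * a + 0).
  by rewrite ext_stanleyE // digits01_3D //= Db Ga; split=> //; lia.
- have [b [a [Db le_b Ga E]]] := covG q; exists (3 * b + 0), (3 * a + 0).
  by rewrite ext_stanleyE // digits01_3D //= Db Ga; split=> //; lia.
Qed.

(** * Self-similarity *)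

Definition self_similar_at (G : pred nat) J :=
  [/\ forall y, y < 3 ^ J -> G (3 ^ J + y) = G y,
      forall y, 2 * 3 ^ J <= y < 3 ^ J.+1 -> G y = false &
      count G (iota 0 (3 ^ J)) = 2 ^ J].

Definition self_similar G := exists J0, forall J, J0 <= J -> self_similar_at G J.

Lemma self_similar_digits01 : self_similar digits01.
Proof.
exists 0 => J _; split; [exact: digits01_shift| |exact: count_digits01].
move=> y /andP[le_y lt_y]; apply/negP => Dy.
by have := digits01_double_lt Dy lt_y; rewrite expnS; lia.
Qed.

Lemma ext_self_similar_at c G t J : 0 < c < 3 -> self_similar_at G J ->
  self_similar_at (ext_stanley c G t) J.+1.
Proof.
move=> /andP[c_gt0 c_lt3] [shiftG gapG countG]; split.
- move=> y; have [q [r [lt_r3 ->]]] := ediv3 y => lt_y.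
  have -> : 3 ^ J.+1 + (3 * q + r) = 3 * (3 ^ J + q) + r by rewrite expnS; lia.
  by rewrite !ext_stanleyE // shiftG //; move: lt_y; rewrite expnS; lia.
- move=> y; have [q [r [lt_r3 ->]]] := ediv3 y => /andP[le_y lt_y].
  by rewrite ext_stanleyE // gapG ?andbF //; move: le_y lt_y; rewrite !expnS; lia.
rewrite expnS count_iota_mul3.
under eq_bigr => r _ do
  rewrite (eq_count (fun q => ext_stanleyE G t q c_gt0 (ltn_ord r))) count_andl countG.
rewrite !big_ord_recr big_ord0 /= expnS.
have [->|->] : c = 1 \/ c = 2 by lia.
all: by rewrite /=; lia.
Qed.

Section ZeroDigitSelfSimilar.
Variables (G : pred nat) (t J : nat).
Hypotheses (ssG : self_similar_at G J) (lt_t : 2 * t < 3 ^ J).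

Lemma ext0_shift y : y < 3 ^ J.+1 ->
  ext_stanley 0 G t (3 ^ J.+1 + y) = ext_stanley 0 G t y.
Proof.
have [q [r [lt_r3 ->]]] := ediv3 y => lt_y; have lt_q : q < 3 ^ J by rewrite expnS in lt_y; lia.
have -> : 3 ^ J.+1 + (3 * q + r) = 3 * (3 ^ J + q) + r by rewrite expnS; lia.
have [shiftG _ _] := ssG; rewrite !ext_stanley0E // shiftG //; congr (_ || _).
rewrite (_ : t <= 3 ^ J + q); last lia.
case: (leqP t q) => [le_tq|lt_qt] /=.
  by rewrite -addnBA // digits01_shift //; lia.
suff -> : digits01 (3 ^ J + q - t) = false by rewrite !andbF.
apply/negP => D; have := digits01_double_lt D (ltac:(lia) : 3 ^ J + q - t < 3 ^ J); lia.
Qed.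

Lemma ext0_gap y : 2 * 3 ^ J.+1 <= y < 3 ^ J.+2 -> ext_stanley 0 G t y = false.
Proof.
have [q [r [lt_r3 ->]]] := ediv3 y; rewrite !expnS => /andP[le_y lt_y].
have [_ gapG _] := ssG; rewrite ext_stanley0E // gapG ?andbF /=; last by rewrite expnS; lia.
apply/negP => /and3P[_ _ D].
by have := digits01_window D (ltac:(rewrite expnS; lia) : q - t < 3 ^ J.+1); lia.
Qed.

Lemma ext0_count : count (ext_stanley 0 G t) (iota 0 (3 ^ J.+1)) = 2 ^ J.+1.
Proof.
have [_ _ countG] := ssG.
have count1 : count (fun q => (t <= q) && digits01 (q - t)) (iota 0 (3 ^ J)) = 2 ^ J.
  rewrite -{1}(subnKC (_ : t <= 3 ^ J)); last lia.
  rewrite count_iotaD count_iota_eq0 => [|x lt_x]; last by rewrite leqNgt lt_x.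
  under eq_count do rewrite leq_addr addKn.
  rewrite -(count_digits01 J) -{2}(subnK (_ : t <= 3 ^ J)); last lia.
  rewrite count_iotaD [X in _ = _ + X]count_iota_eq0 ?addn0 // => x lt_x.
  apply/negP => D; have := digits01_double_lt D (ltac:(lia) : 3 ^ J - t + x < 3 ^ J); lia.
rewrite expnS count_iota_mul3.
under eq_bigr => r _ do rewrite (eq_count (fun q => ext_stanley0E G t q (ltn_ord r))).
rewrite !big_ord_recr big_ord0 /= count1 count_pred0.
under eq_count do rewrite orbF.
by rewrite countG expnS; lia.
Qed.

End ZeroDigitSelfSimilar.

Lemma double_lt_exp3 n : 2 * n < 3 ^ n.
Proof. by elim: n => // n IH; rewrite expnS; lia. Qed.

Lemma self_similar_ext c G t : c < 3 -> self_similar G -> self_similar (ext_stanley c G t).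
Proof.
move=> lt_c3 [J0 ssG]; case: (posnP c) => [->|c_gt0].
  exists (maxn J0 t).+1 => -[|J] //; rewrite ltnS geq_max => /andP[le_J0 le_tJ].
  have lt_t : 2 * t < 3 ^ J.
    by have := double_lt_exp3 t; have := leq_pexp2l (isT : 0 < 3) le_tJ; lia.
  by split; [apply: ext0_shift|apply: ext0_gap|apply: ext0_count]; try apply: ssG.
exists J0.+1 => -[|J] //; rewrite ltnS => le_J0.
by apply: ext_self_similar_at; [rewrite c_gt0 | apply: ssG].
Qed.

(** * Enumerations and Stanley sequences *)

Section Enumeration.
Variables (a : nat -> nat) (G : pred nat).
Hypotheses (a_incr : forall n, a n < a n.+1) (a_enum : forall y, G y <-> exists n, a n = y).

Lemma ltn_enum : {mono a : m n / m < n}.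
Proof. exact/leqW_mono/leq_mono/(homo_ltn ltn_trans). Qed.

Lemma leq_enum : {mono a : m n / m <= n}.
Proof. exact/leq_mono/(homo_ltn ltn_trans). Qed.

Lemma enum_geq n : n <= a n.
Proof. by elim: n => // n IH; have := a_incr n; lia. Qed.

Lemma enum_bracket y : a 0 <= y -> exists n, a n <= y < a n.+1.
Proof.
move=> le_a0y; suff [n lt_yn] : exists n, y < a n.
  elim: n lt_yn => [|n IH] lt_yn; first lia.
  by case: (ltnP y (a n)) => [/IH //|le_ny]; exists n; rewrite le_ny.
by exists y.+1; have := enum_geq y.+1; lia.
Qed.

Lemma count_enum n : count G (iota 0 (a n)) = n.
Proof.
have notG x m : a m < x < a m.+1 -> G x = false.
  by move=> /andP[lt1 lt2]; apply/negP => /a_enum[i Ei]; subst x; rewrite !ltn_enum in lt1 lt2; lia.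
elim: n => [|n IH].
  by apply: count_iota_eq0 => x lt_x; apply/negP => /a_enum[m Em]; have := leq_enum 0 m; lia.
rewrite -(subnKC (ltnW (a_incr n))) count_iotaD IH.
rewrite (_ : a n.+1 - a n = 1 + (a n.+1 - a n).-1); last by have := a_incr n; lia.
rewrite count_iotaD /= !addn0 (_ : G (a n) = true); last by apply/a_enum; exists n.
by rewrite count_iota_eq0 ?addn0 ?addn1 // => x lt_x; apply: (notG _ n); lia.
Qed.

Lemma enum_count y : G y -> a (count G (iota 0 y)) = y.
Proof. by move=> /a_enum[n <-]; rewrite count_enum. Qed.

Lemma enum_shift J i : self_similar_at G J -> i < 2 ^ J -> a (2 ^ J + i) = 3 ^ J + a i.
Proof.
move=> [shiftG _ countG] lt_i; have Gai : G (a i) by apply/a_enum; exists i.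
have lt_ai : a i < 3 ^ J.
  rewrite ltnNge; apply/negP => /subnKC le_ai.
  by have := count_enum i; rewrite -le_ai count_iotaD countG; lia.
rewrite -[RHS]enum_count ?shiftG // count_iotaD countG //.
rewrite (@eq_in_count _ _ G) ?count_enum // => x.
by rewrite mem_iota => /andP[_ lt_x]; apply: shiftG; lia.
Qed.

Lemma enum_independent : G 0 -> self_similar G -> independent a.
Proof.
move=> G0 [J0 ssG]; have a0 : a 0 = 0 by apply: (enum_count G0).
have a_pow J : J0 <= J -> a (2 ^ J) = 3 ^ J.
  by move=> le_J; rewrite -[2 ^ J]addn0 (enum_shift (ssG J le_J)) ?a0 ?addn0 ?expn_gt0.
have a_pred J : J0 <= J -> 2 * a (2 ^ J).-1 + 3 ^ J0 = 2 * a (2 ^ J0).-1 + 3 ^ J.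
  elim: J => [|J IH]; first by rewrite leqn0 => /eqP ->.
  rewrite leq_eqVlt => /orP[/eqP <- //|]; rewrite ltnS => le_J.
  have -> : (2 ^ J.+1).-1 = 2 ^ J + (2 ^ J).-1 by rewrite expnS; have := expn_gt0 2 J; lia.
  rewrite (enum_shift (ssG J le_J)); last by have := expn_gt0 2 J; lia.
  by have := IH le_J; rewrite expnS; lia.
pose lambda : int := (2 * Posz (a (2 ^ J0).-1) + 1 - Posz (3 ^ J0))%R.
exists lambda, J0 => J le_J /=; split.
  by move=> i lt_i; rewrite (enum_shift (ssG J le_J)) ?a_pow.
by rewrite a_pow //; have := a_pred J le_J; lia.
Qed.

End Enumeration.

Lemma enum_exists (G : pred nat) : G 0 -> (forall y, exists2 x, y < x & G x) ->
  exists a, (forall n, a n < a n.+1) /\ (forall y, G y <-> exists n, a n = y).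
Proof.
move=> G0 G_unbnd.
have exP y : exists x, (y < x) && G x by have [x ? ?] := G_unbnd y; exists x; apply/andP.
pose next y := ex_minn (exP y).
have nextP y : [/\ y < next y, G (next y) & forall z, y < z -> G z -> next y <= z].
  by rewrite /next; case: ex_minnP => m /andP[? ?] min_m; split=> // z ? ?; apply/min_m/andP.
pose a n := iter n next 0.
have a_incr n : a n < a n.+1 by have [] := nextP (a n).
exists a; split=> // y; split=> [Gy|[n <-]]; last by case: n => //= n; case: (nextP (a n)).
have [n /andP[le_ny lt_yn]] := enum_bracket a_incr (leq0n y).
case: (ltngtP (a n) y) => [lt_ny||<-]; [|lia|by exists n].
by have [_ _ /(_ y lt_ny Gy)] := nextP (a n); rewrite /= in lt_yn; lia.
Qed.

Lemma self_similar_unbounded (G : pred nat) :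
  G 0 -> self_similar G -> forall y, exists2 x, y < x & G x.
Proof.
move=> G0 [J0 ssG] y; have [shiftG _ _] := ssG (J0 + y) (leq_addr _ _).
exists (3 ^ (J0 + y)); first by have := ltn_expl (J0 + y) (isT : 1 < 3); lia.
by rewrite -[3 ^ _]addn0 shiftG ?expn_gt0.
Qed.

Lemma stanley_of_incr P a : stanley_of P a -> forall n, a n < a n.+1.
Proof.
move=> [k [a_incr [_ a_next]]] n; case: (ltnP n k) => [lt_nk|le_kn].
  by apply: a_incr; rewrite leqnn lt_nk.
by have [] := a_next n le_kn.
Qed.

Section StanleySequence.
Variables (P : nat -> Prop) (A G : pred nat) (t : nat).
Hypotheses (PA : forall x, P x <-> A x) (stG : stanley_set A G t).

Lemma threefree_init : threefree P.
Proof.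
have [prefix _ At_ub apG _] := stG.
by apply: threefree_ap_free apG _ => x /PA Ax; rewrite prefix ?At_ub.
Qed.

Lemma stanley_of_enum a : (forall n, a n < a n.+1) ->
  (forall y, G y <-> exists n, a n = y) -> stanley_of P a.
Proof.
move=> a_incr a_enum; have [prefix At At_ub apG greedy] := stG.
pose k := count G (iota 0 t); have ak : a k = t by apply: enum_count; rewrite ?prefix.
have G_prefix n x : prefix_set a n x -> G x by case=> i _ <-; apply/a_enum; exists i.
exists k; split; first by move=> i j /andP[lt_ij _]; rewrite ltn_enum.
split=> [x|n le_kn].
  rewrite PA; split=> [Ax|[i le_ik <-]].
    have le_xt := At_ub _ Ax.
    have [i ai] : exists i, a i = x by apply/a_enum; rewrite prefix.
    by exists i => //; rewrite -(leq_enum a_incr) ai ak.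
  by rewrite -prefix ?(G_prefix k) -?ak ?leq_enum //; exists i.
split; [exact: a_incr|exact: threefree_ap_free apG (G_prefix _)|].
move=> y lt_ny lt_yn yfree.
have NGy : ~~ G y.
  by apply/negP => /a_enum[m am]; subst y; rewrite !(ltn_enum a_incr) in lt_ny lt_yn; lia.
have lt_ty : t < y by rewrite -ak; have := leq_enum a_incr k n; lia.
have [x [w [Gx Gw lt_wy E]]] := greedy y lt_ty NGy.
have [i ai] := (a_enum x).1 Gx; have [j aj] := (a_enum w).1 Gw.
apply: (yfree x w y _ lt_wy _ _ (or_intror erefl) E); first lia.
- by left; exists i; rewrite // -ltnS -(ltn_enum a_incr); lia.
- by left; exists j; rewrite // -ltnS -(ltn_enum a_incr); lia.
Qed.

Lemma stanley_of_init_max a k : (forall n, a n < a n.+1) ->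
  (forall x, P x <-> prefix_set a k x) -> a k = t.
Proof.
move=> a_incr a_init; have [i le_ik ai] := (a_init t).1 ((PA t).2 (stanley_max_mem stG)).
have /PA/(stanley_max_ub stG) : P (a k) by apply/a_init; exists k.
by have := leq_enum a_incr i k; lia.
Qed.

Lemma enum_stanley_of a : stanley_of P a -> forall y, G y <-> exists n, a n = y.
Proof.
move=> sta; have a_incr := stanley_of_incr sta; case: sta => k [_ [a_init a_next]].
have [prefix At At_ub apG greedy] := stG; have ak := stanley_of_init_max a_incr a_init.
elim/ltn_ind => y IH; have [le_yt|lt_ty] := leqP y t.
  rewrite prefix // -PA a_init; split=> [[i _ <-]|[n an]]; first by exists i.
  by exists n; rewrite // -(leq_enum a_incr) ak an.
have [n /andP[le_ny lt_yn]] : exists n, a n <= y < a n.+1.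
  by apply: (enum_bracket a_incr); have := leq_enum a_incr 0 k; lia.
have le_kn : k <= n.
  rewrite leqNgt; apply/negP => lt_nk.
  by have := leq_enum a_incr n.+1 k; rewrite lt_nk; lia.
have [lt_ny|ay] := ltnP (a n) y.
  split=> [Gy|[m am]]; last by subst y; rewrite !(ltn_enum a_incr) in lt_ny lt_yn; lia.
  have [_ _ no_ext] := a_next n le_kn; case: (no_ext y lt_ny lt_yn).
  apply: (threefree_ap_free apG) => x [[i le_in <-]|->] //; apply/IH; last by exists i.
  by have := leq_enum a_incr i n; lia.
have {le_ny}{}ay : a n = y by lia.
split=> [_|_]; first by exists n.
apply/negPn/negP => NGy; have [x [w [Gx Gw lt_wy E]]] := greedy y lt_ty NGy.
have [i ai] := (IH x ltac:(lia)).1 Gx; have [j aj] := (IH w lt_wy).1 Gw.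
have [m nm le_km] : exists2 m, n = m.+1 & k <= m.
  case: n le_kn ay {lt_yn} => [|m] le_km ay.
    by move: le_km ak; rewrite leqn0 => /eqP ->; lia.
  exists m => //; rewrite leqNgt; apply/negP => lt_mk.
  by move: ak; rewrite (_ : k = m.+1) ?ay; lia.
have [_ /(_ x w y) + _] := a_next m le_km; rewrite -nm.
apply; try lia; [exists i => //|exists j => //|by exists n].
all: by rewrite -(leq_enum a_incr); lia.
Qed.

Lemma stanley_of_exists : G 0 -> self_similar G -> exists a, stanley_of P a.
Proof.
move=> G0 ssG; have [a [a_incr a_enum]] := enum_exists G0 (self_similar_unbounded G0 ssG).
by exists a; apply: stanley_of_enum.
Qed.

End StanleySequence.

(** * The set of the theorem *)

(* Digit lists are read from the lowest digit up. *)
Fixpoint ternary_val (l : seq nat) : nat :=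
  if l is c :: l' then 3 * ternary_val l' + c else 0.

Fixpoint init_of_digits (l : seq nat) : pred nat :=
  if l is c :: l' then ext_init c (init_of_digits l') else pred1 0.

Fixpoint stanley_of_digits (l : seq nat) : pred nat :=
  if l is c :: l' then ext_stanley c (stanley_of_digits l') (ternary_val l')
  else digits01.

Fixpoint admissible_digits (l : seq nat) : bool :=
  if l is c :: l' then
    [&& c < 3, (c == 2) ==> (head 0 l' != 1) & admissible_digits l']
  else true.

Lemma stanley_set_digits01 : stanley_set (pred1 0) digits01 0.
Proof.
split=> //; [by move=> x; rewrite leqn0 => /eqP ->|by move=> x /eqP ->|exact: digits01_ap_free|].
move=> y _ NDy; have [p0 [p1 [D0 D1 E _ lt_p1]]] := digits01_ap_completion y.
by exists p0, p1; split=> //; exact: lt_p1.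
Qed.

Lemma shifted_cover_digits01 : shifted_cover digits01 0.
Proof.
move=> u; have [p0 [p1 [D0 D1 E le_p1 _]]] := digits01_ap_completion u.
by exists p1, p0; split=> //; lia.
Qed.

Lemma stanley_of_digitsP l : admissible_digits l ->
  [/\ stanley_set (init_of_digits l) (stanley_of_digits l) (ternary_val l),
      shifted_cover (stanley_of_digits l) (ternary_val l) &
      head 0 l != 1 -> stanley_of_digits l (ternary_val l).+1].
Proof.
elim: l => [|c l IH] /=.
  by split; [exact: stanley_set_digits01|exact: shifted_cover_digits01|].
case/and3P=> lt_c3 + /IH[stG covG Gt1].
have [->|[->|->]] : c = 0 \/ c = 1 \/ c = 2 by lia.
all: move=> /= c2.
- rewrite addn0; split; [exact: ext0_stanley_set|exact: shifted_cover_ext0|].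
  by move=> _; rewrite -addn1 ext_stanley0E //= leqnn subnn.
- by split; [exact: ext_stanley_set|exact: shifted_cover_ext1|].
- split; [exact: ext_stanley_set|exact: shifted_cover_ext2 covG (Gt1 c2)|].
  by rewrite (_ : (3 * _ + 2).+1 = 3 * (ternary_val l).+1 + 0) ?ext_stanleyE //; lia.
Qed.

Lemma self_similar_stanley_of_digits l :
  all (fun c => c < 3) l -> self_similar (stanley_of_digits l).
Proof.
elim: l => [|c l IH] /=; first by move=> _; exact: self_similar_digits01.
by case/andP=> lt_c3 /IH; apply: self_similar_ext.
Qed.

Lemma init_of_digitsP l x : all (fun c => c < 3) l ->
  init_of_digits l x <-> exists f : nat -> nat,
    (forall i, i < size l -> f i = 0 \/ f i = nth 0 l i) /\
    x = \sum_(i < size l) f i * 3 ^ i.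
Proof.
elim: l x => [|c l IH] x /=.
  split=> [/eqP ->|[f [_ ->]]]; last by rewrite big_ord0.
  by exists (fun _ => 0); rewrite big_ord0.
have sumS (f : nat -> nat) : \sum_(i < (size l).+1) f i * 3 ^ i
    = 3 * \sum_(i < size l) f i.+1 * 3 ^ i + f 0.
  rewrite big_ord_recl big_distrr addnC muln1; congr (_ + _).
  by apply: eq_bigr => i _; rewrite expnS mulnCA.
case/andP=> lt_c3 /IH {}IH; have [q [r [lt_r3 ->]]] := ediv3 x.
rewrite ext_initE //; split.
  move=> /andP[Rr /IH[f [f_digits ->]]].
  pose g i := if i is i'.+1 then f i' else r.
  exists g; rewrite sumS; split=> //.
  case=> [|i] /= lt_i; last exact: f_digits.
  by move: Rr => /orP[/eqP ->|/andP[_ /eqP ->]]; [left|right].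
move=> [f [f_digits]]; rewrite sumS => E.
have [f0|f0] := f_digits 0 (ltn0Sn _); rewrite /= in f0.
all: have [Er Eq] : r = f 0 /\ q = \sum_(i < size l) f i.+1 * 3 ^ i by rewrite f0 in E *; lia.
all: rewrite Er f0 ?eqxx ?andbT ?orbN /=; apply/IH; exists (fun i => f i.+1).
all: by split=> // i lt_i; apply: (f_digits i.+1).
Qed.

Section DigitTypes.
Variables (k : nat) (T1 T2 : {set 'I_k.+1}).

(* [inord i] is a junk value for [i > k]; only [i <= k] matters below. *)
Definition digit_type (i : nat) : nat :=
  if inord i \in T1 then 1 else if inord i \in T2 then 2 else 0.

Definition type_digits := [seq digit_type i | i <- iota 0 k.+1].

Lemma digit_type_lt3 i : digit_type i < 3.
Proof. by rewrite /digit_type; case: ifP => //; case: ifP. Qed.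

Lemma type_digits_lt3 : all (fun c => c < 3) type_digits.
Proof. by apply/allP => c /mapP[i _ ->]; apply: digit_type_lt3. Qed.

Lemma admissible_type_digits :
  (forall t : 'I_k.+1, t \in T1 -> forall u : 'I_k.+1, u \in T2 -> val t <> (val u).+1) ->
  admissible_digits type_digits.
Proof.
move=> T12; suff : forall n m, m + n <= k.+1 ->
    admissible_digits [seq digit_type i | i <- iota m n] by apply.
elim=> [|n IH] m // le_mn /=; rewrite digit_type_lt3 IH /= ?andbT; last lia.
apply/implyP => /eqP m2; case: n {IH} le_mn => [|n] le_mn //=; apply/eqP.
move: m2; rewrite /digit_type; case: ifP => // _; case: ifP => // T2m _.
case: ifP => [T1m _|_]; last by case: ifP.
by apply: (T12 _ T1m _ T2m); rewrite /= !inordK //; lia.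
Qed.

Lemma setA_init_of_digits x : [disjoint T1 & T2] ->
  setA T1 T2 x <-> init_of_digits type_digits x.
Proof.
move=> T12; rewrite init_of_digitsP ?type_digits_lt3 // size_map size_iota.
have nth_type i : i < k.+1 -> nth 0 type_digits i = digit_type i.
  by move=> lt_i; rewrite (nth_map 0) ?size_iota // nth_iota.
split=> [[S1 [S2 [S1T1 S2T2 ->]]]|[f [f_digits ->]]].
  exists (fun i => (inord i \in S1) + 2 * (inord i \in S2)); split.
    move=> i lt_i; rewrite nth_type // /digit_type.
    case S1i: (inord i \in S1); case S2i: (inord i \in S2); rewrite /=; try by left.
    + have /(subsetP S1T1) T1i := S1i; have /(subsetP S2T2) := S2i.
      by rewrite (disjointFr T12 T1i).
    + by rewrite (subsetP S1T1 _ S1i); right.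
    + have /(subsetP S2T2) T2i := S2i.
      by rewrite (disjointFl T12 T2i) T2i; right.
  rewrite big_distrr /= (big_mkcond (fun i => i \in S1)) (big_mkcond (fun i => i \in S2)).
  rewrite -big_split /=; apply: eq_bigr => i _.
  by rewrite inord_val; case: (i \in S1); case: (i \in S2) => /=; lia.
exists [set j : 'I_k.+1 | f j == 1], [set j : 'I_k.+1 | f j == 2]; split.
- apply/subsetP => j; rewrite inE => /eqP fj.
  have := f_digits j (ltn_ord j); rewrite nth_type // /digit_type inord_val fj.
  by case=> //; case: ifP => //; case: ifP.
- apply/subsetP => j; rewrite inE => /eqP fj.
  have := f_digits j (ltn_ord j); rewrite nth_type // /digit_type inord_val fj.
  by case=> //; case: ifP => //; case: ifP.
rewrite big_distrr /= (big_mkcond (fun i => i \in _)) (big_mkcond (fun i => i \in _)).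
rewrite -big_split /=; apply: eq_bigr => i _; rewrite !inE.
have : f i < 3.
  by have := f_digits i (ltn_ord i); rewrite nth_type //; have := digit_type_lt3 i; lia.
by case: (f i) => [|[|[|]]].
Qed.

End DigitTypes.

Theorem theorem3 (k : nat) (T1 T2 : {set 'I_k.+1}) :
  0 < k ->
  [disjoint T1 & T2] ->
  (forall t : 'I_k.+1, t \in T1 -> forall u : 'I_k.+1, u \in T2 -> val t <> (val u).+1) ->
  threefree (setA T1 T2) /\
  (exists a, stanley_of (setA T1 T2) a) /\
  (forall a, stanley_of (setA T1 T2) a -> independent a).
Proof.
move=> _ T12 T1T2; pose l := type_digits T1 T2.
have PA x : setA T1 T2 x <-> init_of_digits l x by apply: setA_init_of_digits.
have [stG _ _] := stanley_of_digitsP (admissible_type_digits T1T2).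
have ssG := self_similar_stanley_of_digits (type_digits_lt3 T1 T2).
have G0 : stanley_of_digits l 0.
  rewrite (stanley_prefix stG) // -PA.
  by exists set0, set0; rewrite !sub0set !big_set0.
split; first exact: threefree_init PA stG.
split; first exact: stanley_of_exists PA stG G0 ssG.
move=> a sta; apply: enum_independent G0 ssG.
  exact: stanley_of_incr sta.
exact: (enum_stanley_of PA stG sta).
Qed.
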